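(* Let $\mathcal{X}\in\mathbb{R}^{n_1\times n_2\times n_3}$, let $q\in\mathbb{N}$, and let $\mathcal{B}\in\mathbb{R}^{n_2\times s\times n_3}$ (in the algorithm, a Gaussian random tensor). Form $$\mathcal{K}=[\mathcal{X}*\mathcal{B},\ (\mathcal{X}*\mathcal{X}^\top)*\mathcal{X}*\mathcal{B},\ \ldots,\ (\mathcal{X}*\mathcal{X}^\top)^{q}*\mathcal{X}*\mathcal{B}]$$ and let $\mathcal{Q}\in\mathbb{R}^{n_1\times m\times n_3}$ be the orthonormal factor of a T-QR factorization $\mathcal{K}=\mathcal{Q}*\mathcal{R}$, so that $\mathcal{Q}^\top*\mathcal{Q}=\mathcal{I}$. Put $\mathcal{P}_k=\mathcal{Q}*\mathcal{Q}^\top$ and $$\mathcal{Z}=[\mathcal{X},\ (\mathcal{X}*\mathcal{X}^\top)*\mathcal{X},\ \ldots,\ (\mathcal{X}*\mathcal{X}^\top)^{q}*\mathcal{X}]\in\mathbb{R}^{n_1\times n_2(q+1)\times n_3}.$$ Then $$\|(\mathcal{I}-\mathcal{Q}*\mathcal{Q}^\top)*\mathcal{X}\|_2\le \|(\mathcal{I}-\mathcal{P}_k)*\mathcal{Z}\|_2^{\frac{1}{2q+1}}.$$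
   Context: For a real third-order tensor $\mathcal{X}\in\mathbb{R}^{n_1\times n_2\times n_3}$ let $X^{(1)},\dots,X^{(n_3)}$ be its frontal slices ($X^{(k)}=\mathcal{X}(:,:,k)$). - $\mathtt{bcirc}(\mathcal{X})\in\mathbb{R}^{n_1n_3\times n_2n_3}$ is the block circulant matrix whose first block column is $X^{(1)},X^{(2)},\dots,X^{(n_3)}$, each subsequent block column being the cyclic downward shift of the previous one. - $\mathtt{unfold}(\mathcal{X})$ stacks the frontal slices vertically into an $n_1n_3\times n_2$ matrix, and $\mathtt{fold}$ is its inverse. - The T-product of $\mathcal{X}\in\mathbb{R}^{n_1\times n_2\times n_3}$ and $\mathcal{Y}\in\mathbb{R}^{n_2\times n_4\times n_3}$ is $\mathcal{X}*\mathcal{Y}=\mathtt{fold}(\mathtt{bcirc}(\mathcal{X})\,\mathtt{unfold}(\mathcal{Y}))\in\mathbb{R}^{n_1\times n_4\times n_3}$. - The transpose $\mathcal{X}^\top\in\mathbb{R}^{n_2\times n_1\times n_3}$ has frontal slices $(X^{(1)})^\top$ and, for $k=2,\dots,n_3$, $\mathcal{X}^\top(:,:,k)=(X^{(n_3+2-k)})^\top$. - The identity tensor $\mathcal{I}$ (of size $n\times n\times n_3$) has first frontal slice $I_n$ and all other frontal slices zero. Powers are $\mathcal{A}^j=\mathcal{A}*\cdots*\mathcal{A}$ ($j$ factors), with $\mathcal{A}^0=\mathcal{I}$. - The spectral norm is $\|\mathcal{X}\|_2=\|\mathtt{bcirc}(\mathcal{X})\|_2$. - $[\mathcal{A}_1,\ldots,\mathcal{A}_r]$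 denotes concatenation along the second mode: tensors with the same first and third dimensions have their frontal slices concatenated horizontally. - A T-QR factorization of $\mathcal{K}$ is computed by applying the fast Fourier transform along the third mode, taking a QR factorization of each frontal slice, and transforming back. It yields $\mathcal{K}=\mathcal{Q}*\mathcal{R}$ with $\mathcal{Q}^\top*\mathcal{Q}=\mathcal{I}$ and $\mathcal{R}$ having upper triangular frontal slices. *)

From HB Require Import structures.
From mathcomp Require Import all_boot all_order all_algebra.
From mathcomp Require Import classical_sets reals exp.
Set Implicit Arguments. Unset Strict Implicit. Unset Printing Implicit Defensive.
Import Order.TTheory GRing.Theory Num.Theory.
Local Open Scope ring_scope.

(* A real third-order tensor n1 x n2 x n3, given by its frontal slices
   X^(1), ..., X^(n3) (0-based here: X k for k : 'I_n3). *)
Definition tensor (R : Type) (n1 n2 n3 : nat) := 'I_n3 -> 'M[R]_(n1, n2).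

Lemma ord_pos n (i : 'I_n) : (0 < n)%N.
Proof. by apply: leq_ltn_trans (ltn_ord i). Qed.

Definition csub n (i j : 'I_n) : 'I_n :=
  Ordinal (ltn_pmod (i + n - j) (ord_pos i)).
(* (n - k) mod n : the 0-based index of slice k of the transpose *)
Definition cneg n (k : 'I_n) : 'I_n :=
  Ordinal (ltn_pmod (n - k) (ord_pos k)).

Section Tensors.
Variable R : realType.

Definition bcirc n1 n2 n3 (X : tensor R n1 n2 n3) :
  'M[R]_(\sum_(i < n3) n1, \sum_(j < n3) n2) :=
  mxblock (fun i j : 'I_n3 => X (csub i j)).

Definition tunfold n1 n2 n3 (X : tensor R n1 n2 n3) :
  'M[R]_(\sum_(i < n3) n1, n2) := mxcol (fun i : 'I_n3 => X i).

Definition tfold n1 n2 n3 (M : 'M[R]_(\sum_(i < n3) n1, n2)) : tensor R n1 n2 n3 :=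
  fun i => submxcol M i.

Definition tprod n1 n2 n4 n3 (X : tensor R n1 n2 n3) (Y : tensor R n2 n4 n3) :
  tensor R n1 n4 n3 := tfold (bcirc X *m tunfold Y).

Definition ttr n1 n2 n3 (X : tensor R n1 n2 n3) : tensor R n2 n1 n3 :=
  fun k => (X (cneg k))^T.

Definition tid n n3 : tensor R n n n3 :=
  fun k => if (k == 0 :> nat) then 1%:M else 0.

Definition tsub n1 n2 n3 (X Y : tensor R n1 n2 n3) : tensor R n1 n2 n3 :=
  fun k => X k - Y k.

Fixpoint tpow n n3 (A : tensor R n n n3) (j : nat) : tensor R n n n3 :=
  match j with
  | O => @tid n n3
  | S j' => tprod A (tpow A j')
  end.

Definition tcat n1 n2 n3 r (A : 'I_r -> tensor R n1 n2 n3) :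
  tensor R n1 (\sum_(j < r) n2) n3 :=
  fun k => mxrow (fun j : 'I_r => A j k).

Definition vnorm n (v : 'cV[R]_n) : R := Num.sqrt (\sum_i v i 0 ^+ 2).

Definition mspec m n (A : 'M[R]_(m, n)) : R :=
  sup [set vnorm (A *m v) | v in [set v : 'cV[R]_n | vnorm v <= 1]].

Definition tspec n1 n2 n3 (X : tensor R n1 n2 n3) : R := mspec (bcirc X).

Definition upper_slices m p n3 (T : tensor R m p n3) : Prop :=
  forall k (i : 'I_m) (j : 'I_p), (j < i)%N -> T k i j = 0.

End Tensors.

From HB Require Import structures.
From mathcomp Require Import all_boot all_order all_algebra.
From mathcomp Require Import boolp classical_sets reals exp.
From mathcomp Require Import lra zify.
Import Order.TTheory GRing.Theory Num.Theory.
Set Implicit Arguments. Unset Strict Implicit. Unset Printing Implicit Defensive.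
Local Open Scope ring_scope.

(* Applying bcirc turns T-products, transposes, the identity and differences
   of tensors into the corresponding matrix operations, so with A := bcirc X,
   the orthogonal projector P := I - bcirc Q (bcirc Q)^T and G := A A^T, the
   claim is a statement about block-circulant matrices.  The last block of
   bcirc Z is G^q A, and dropping blocks cannot increase the spectral norm, so
   it suffices that |P A|^(2q+1) <= |P G^q A|.  For a unit vector v put
   w := P A v; the moments d k := <w, G^k w> form a log-convex sequence by
   Cauchy-Schwarz, whence d 1 ^ (2q+1) <= d (2q+1) * d 0 ^ (2q).  Since
   d 0 = |w|^2, d 1 >= |w|^4 and d (2q+1) <= |w|^2 |P G^q A|^2, this gives
   |w|^(2q+1) <= |P G^q A|. *)

Section Euclidean.
Variable R : realType.

Definition dot n (u v : 'cV[R]_n) : R := (u^T *m v) 0 0.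

Lemma dotC n (u v : 'cV[R]_n) : dot u v = dot v u.
Proof. by rewrite /dot -[v^T *m u]trmxK trmx_mul trmxK [RHS]mxE. Qed.

Lemma dot_mulmxl m n (A : 'M[R]_(m, n)) u v : dot (A *m u) v = dot u (A^T *m v).
Proof. by rewrite /dot trmx_mul mulmxA. Qed.

Lemma dot_mulmxr m n (A : 'M[R]_(m, n)) u v : dot u (A *m v) = dot (A^T *m u) v.
Proof. by rewrite dot_mulmxl trmxK. Qed.

Lemma dotBr n (u v v' : 'cV[R]_n) : dot u (v - v') = dot u v - dot u v'.
Proof. by rewrite /dot mulmxBr !mxE. Qed.

Lemma dotZr n a (u v : 'cV[R]_n) : dot u (a *: v) = a * dot u v.
Proof. by rewrite /dot -scalemxAr !mxE. Qed.

Lemma dot0r n (u : 'cV[R]_n) : dot u 0 = 0.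
Proof. by rewrite /dot mulmx0 mxE. Qed.

Lemma dotBl n (u u' v : 'cV[R]_n) : dot (u - u') v = dot u v - dot u' v.
Proof. by rewrite dotC dotBr !(dotC v). Qed.

Lemma dotZl n a (u v : 'cV[R]_n) : dot (a *: u) v = a * dot u v.
Proof. by rewrite dotC dotZr dotC. Qed.

Lemma dotvv n (u : 'cV[R]_n) : dot u u = \sum_i u i 0 ^+ 2.
Proof. by rewrite /dot mxE; apply: eq_bigr => i _; rewrite mxE expr2. Qed.

Lemma dotvv_ge0 n (u : 'cV[R]_n) : 0 <= dot u u.
Proof. by rewrite dotvv sumr_ge0 // => i _; rewrite sqr_ge0. Qed.

Lemma dotvv_eq0 n (u : 'cV[R]_n) : dot u u = 0 -> u = 0.
Proof.
rewrite dotvv => /eqP; rewrite psumr_eq0 => [/allP u0|i _]; last exact: sqr_ge0.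
apply/matrixP => i j; rewrite (ord1 j) mxE.
by apply/eqP; rewrite -sqrf_eq0; apply: u0; rewrite mem_index_enum.
Qed.

Lemma dot_CauchySchwarz n (u v : 'cV[R]_n) : dot u v ^+ 2 <= dot u u * dot v v.
Proof.
have [/dotvv_eq0 ->|vv_neq0] := eqVneq (dot v v) 0.
  by rewrite !dot0r expr0n mulr0.
have vv_gt0 : 0 < dot v v by rewrite lt0r vv_neq0 dotvv_ge0.
(* 0 <= |<v,v> u - <u,v> v|^2 = <v,v> (<u,u> <v,v> - <u,v>^2) *)
have := dotvv_ge0 (dot v v *: u - dot u v *: v).
rewrite !(dotBl, dotBr, dotZl, dotZr) (dotC v u) => h.
by rewrite -subr_ge0 -(pmulr_rge0 _ vv_gt0); nra.
Qed.

Lemma vnormE n (u : 'cV[R]_n) : vnorm u = Num.sqrt (dot u u).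
Proof. by rewrite dotvv. Qed.

Lemma vnorm_ge0 n (u : 'cV[R]_n) : 0 <= vnorm u.
Proof. exact: sqrtr_ge0. Qed.

Lemma vnorm_sq n (u : 'cV[R]_n) : vnorm u ^+ 2 = dot u u.
Proof. by rewrite vnormE sqr_sqrtr ?dotvv_ge0. Qed.

Lemma vnorm0 n : vnorm (0 : 'cV[R]_n) = 0.
Proof. by rewrite vnormE dot0r sqrtr0. Qed.

Lemma vnorm_eq0 n (u : 'cV[R]_n) : vnorm u = 0 -> u = 0.
Proof. by move=> u0; apply: dotvv_eq0; rewrite -vnorm_sq u0 expr0n. Qed.

Lemma vnormZ n a (u : 'cV[R]_n) : vnorm (a *: u) = `|a| * vnorm u.
Proof. by rewrite !vnormE dotZl dotZr mulrA -expr2 sqrtrM ?sqr_ge0 // sqrtr_sqr. Qed.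

Lemma vnorm_isometry m n (E : 'M[R]_(m, n)) u :
  E^T *m E = 1%:M -> vnorm (E *m u) = vnorm u.
Proof. by move=> EtE; rewrite !vnormE dot_mulmxl mulmxA EtE mul1mx. Qed.

Lemma dot_le_vnorm n (u v : 'cV[R]_n) : dot u v <= vnorm u * vnorm v.
Proof.
apply: le_trans (ler_norm _) _.
rewrite -sqrtr_sqr !vnormE -sqrtrM ?dotvv_ge0 //.
exact/ler_wsqrtr/dot_CauchySchwarz.
Qed.

Lemma mulmx_entry_dot m n (B : 'M[R]_(m, n)) v i : (B *m v) i 0 = dot (row i B)^T v.
Proof. by rewrite /dot trmxK -row_mul [RHS]mxE. Qed.

Lemma vnorm_mulmx_bounded m n (B : 'M[R]_(m, n)) :
  has_ubound [set vnorm (B *m v) | v in [set v : 'cV[R]_n | vnorm v <= 1]].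
Proof.
set C := \sum_i dot (row i B)^T (row i B)^T.
exists (1 + C) => _ [v /= v_le1 <-].
have BvC : vnorm (B *m v) ^+ 2 <= C.
  rewrite vnorm_sq dotvv; apply: ler_sum => i _.
  rewrite mulmx_entry_dot; apply: le_trans (dot_CauchySchwarz _ _) _.
  by rewrite ler_piMr ?dotvv_ge0 // -vnorm_sq expr_le1 ?vnorm_ge0.
have := vnorm_ge0 (B *m v); nra.
Qed.

Lemma mspec_ub m n (B : 'M[R]_(m, n)) v : vnorm v <= 1 -> vnorm (B *m v) <= mspec B.
Proof. by move=> v_le1; apply: ub_le_sup (vnorm_mulmx_bounded B) _ _; exists v. Qed.

Lemma mspec_le m n (B : 'M[R]_(m, n)) c :
  (forall v, vnorm v <= 1 -> vnorm (B *m v) <= c) -> mspec B <= c.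
Proof.
move=> Bc; apply: ge_sup => [|_ [v /= /Bc Bvc <-] //].
by exists (vnorm (B *m 0)), 0; rewrite //= vnorm0.
Qed.

Lemma mspec_ge0 m n (B : 'M[R]_(m, n)) : 0 <= mspec B.
Proof. by apply: le_trans (mspec_ub B (_ : vnorm 0 <= 1)); rewrite ?mulmx0 vnorm0. Qed.

Lemma vnorm_mulmx_le m n (B : 'M[R]_(m, n)) v : vnorm (B *m v) <= mspec B * vnorm v.
Proof.
have [/vnorm_eq0 ->|v_neq0] := eqVneq (vnorm v) 0.
  by rewrite mulmx0 !vnorm0 mulr0.
have v_gt0 : 0 < vnorm v by rewrite lt0r v_neq0 vnorm_ge0.
have v1 : vnorm ((vnorm v)^-1 *: v) <= 1.
  by rewrite vnormZ ger0_norm ?invr_ge0 ?vnorm_ge0 // mulVf.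
have := mspec_ub B v1.
by rewrite -scalemxAr vnormZ ger0_norm ?invr_ge0 ?vnorm_ge0 // ler_pdivrMl // mulrC.
Qed.

Lemma mspec_mulmx_isometry m n p (B : 'M[R]_(m, n)) (E : 'M[R]_(n, p)) :
  E^T *m E = 1%:M -> mspec (B *m E) <= mspec B.
Proof.
move=> EtE; apply: mspec_le => v v_le1.
by rewrite -mulmxA mspec_ub // vnorm_isometry.
Qed.

End Euclidean.

Lemma trmx_expr_sym (R : comPzRingType) n (M : 'M[R]_n) k :
  M^T = M -> (M ^+ k)^T = M ^+ k.
Proof.
move=> M_sym; elim: k => [|k IHk]; first exact: trmx1.
by rewrite exprS -mulmxE trmx_mul IHk M_sym mulmxE -exprSr -exprS.
Qed.

Lemma half_ind (P : nat -> Prop) :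
  (forall h, P (h + h)%N) -> (forall h, P (h + h).+1) -> forall k, P k.
Proof.
move=> Peven Podd k; rewrite -[k]odd_double_half -addnn.
by case: (odd k); [apply: Podd | apply: Peven].
Qed.

Section LogConvex.
Variables (R : realFieldType) (c : nat -> R).
Hypotheses (c_ge0 : forall j, 0 <= c j) (c_logcvx : forall j, c j.+1 ^+ 2 <= c j * c j.+2).

Lemma log_convex_ratio j : c 1 * c j <= c 0 * c j.+1.
Proof.
elim: j => [|j IHj]; first by rewrite mulrC.
have [cj0|cj_neq0] := eqVneq (c j) 0.
  suff -> : c j.+1 = 0 by rewrite mulr0 mulr_ge0.
  apply/eqP; rewrite -sqrf_eq0 eq_le sqr_ge0 andbT.
  by rewrite (le_trans (c_logcvx j)) // cj0 mul0r.
have cj_gt0 : 0 < c j by rewrite lt0r cj_neq0 c_ge0.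
rewrite -(ler_pM2l cj_gt0).
have := ler_wpM2r (c_ge0 j.+1) IHj; have := ler_wpM2l (c_ge0 0) (c_logcvx j).
lra.
Qed.

Lemma log_convex_pow n : c 1 ^+ n.+1 <= c n.+1 * c 0 ^+ n.
Proof.
elim: n => [|n IHn]; first by rewrite expr1 expr0 mulr1.
rewrite exprS (le_trans (ler_wpM2l (c_ge0 1) IHn)) // mulrA exprS mulrA.
by rewrite [c n.+2 * _]mulrC ler_wpM2r ?exprn_ge0 ?log_convex_ratio.
Qed.

End LogConvex.

Section GramMoments.
Variables (R : realType) (N p : nat) (A : 'M[R]_(N, p)) (w : 'cV[R]_N).
Local Notation G := (A *m A^T).

Definition gram_moment k := dot w (G ^+ k *m w).

Lemma gram_sym : G^T = G.
Proof. by rewrite trmx_mul trmxK. Qed.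

Lemma gram_momentD a b : dot (G ^+ a *m w) (G ^+ b *m w) = gram_moment (a + b).
Proof. by rewrite dot_mulmxl mulmxA trmx_expr_sym ?gram_sym // /gram_moment exprD -mulmxE. Qed.

Lemma gram_momentSD a b :
  dot (A^T *m (G ^+ a *m w)) (A^T *m (G ^+ b *m w)) = gram_moment (a + b).+1.
Proof.
rewrite dot_mulmxl trmxK !mulmxA -[G *m G ^+ b]/(G * G ^+ b) -exprS.
by rewrite gram_momentD addnS.
Qed.

Lemma gram_moment_ge0 k : 0 <= gram_moment k.
Proof.
by elim/half_ind: k => h; [rewrite -gram_momentD | rewrite -gram_momentSD]; apply: dotvv_ge0.
Qed.

Lemma gram_moment_log_convex k :
  gram_moment k.+1 ^+ 2 <= gram_moment k * gram_moment k.+2.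
Proof.
elim/half_ind: k => h.
  have := dot_CauchySchwarz (G ^+ h *m w) (G ^+ h.+1 *m w).
  by rewrite !gram_momentD !addSn !addnS.
have := dot_CauchySchwarz (A^T *m (G ^+ h *m w)) (A^T *m (G ^+ h.+1 *m w)).
by rewrite !gram_momentSD !addSn !addnS.
Qed.

End GramMoments.

Lemma le_powR_inv (R : realType) (x y : R) n :
  0 <= x -> x ^+ n.+1 <= y -> x <= powR y (1 / n.+1%:R).
Proof.
move=> x_ge0 xy.
have -> : x = powR (x ^+ n.+1) (1 / n.+1%:R).
  by rewrite -powR_mulrn // -powRrM mul1r mulfV ?pnatr_eq0 // powRr1.
apply: ge0_ler_powR => //; rewrite ?nnegrE ?exprn_ge0 //.
  by rewrite divr_ge0 ?ler0n.
exact: le_trans (exprn_ge0 _ x_ge0) xy.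
Qed.

Section ProjectorPowers.
Variables (R : realType) (N p : nat) (P : 'M[R]_N) (A : 'M[R]_(N, p)).
Hypotheses (P_sym : P^T = P) (P_idem : P *m P = P).
Local Notation G := (A *m A^T).

Lemma dot_proj_fixed w u : P *m w = w -> dot w (P *m u) = dot w u.
Proof. by move=> Pw; rewrite dot_mulmxr P_sym Pw. Qed.

Lemma gram_moment1_ge v : vnorm v <= 1 ->
  vnorm (P *m A *m v) ^+ 4 <= gram_moment A (P *m A *m v) 1.
Proof.
move=> v_le1; set w := P *m A *m v.
have Pw : P *m w = w by rewrite /w !mulmxA P_idem.
have w2_le : vnorm w ^+ 2 <= vnorm (A^T *m w).
  rewrite vnorm_sq {2}/w -mulmxA dot_proj_fixed // dot_mulmxr.
  by apply: le_trans (dot_le_vnorm _ _) _; rewrite ler_piMr ?vnorm_ge0.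
rewrite -(gram_momentSD A w 0 0) mul1mx -vnorm_sq (_ : 4 = 2 * 2)%N // exprM.
by apply: lerXn2r; rewrite ?nnegrE ?exprn_ge0 ?vnorm_ge0.
Qed.

Lemma gram_moment_odd_le q w : P *m w = w ->
  gram_moment A w (2 * q).+1 <= vnorm w ^+ 2 * mspec (P *m G ^+ q *m A) ^+ 2.
Proof.
move=> Pw; set S := mspec _; set y := A^T *m (G ^+ q *m w).
have S_ge0 : 0 <= S := mspec_ge0 _.
rewrite mul2n -addnn -gram_momentSD -/y -vnorm_sq -exprMn.
have y_le : vnorm y ^+ 2 <= vnorm w * (S * vnorm y).
  rewrite vnorm_sq {1}/y dot_mulmxl trmxK dot_mulmxl trmx_expr_sym ?gram_sym //.
  rewrite -dot_proj_fixed //; apply: le_trans (dot_le_vnorm _ _) _.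
  by rewrite ler_wpM2l ?vnorm_ge0 // 2!mulmxA vnorm_mulmx_le.
apply: lerXn2r; rewrite ?nnegrE ?mulr_ge0 ?vnorm_ge0 //.
have [->|y_neq0] := eqVneq (vnorm y) 0; first by rewrite mulr_ge0 ?vnorm_ge0.
have y_gt0 : 0 < vnorm y by rewrite lt0r y_neq0 vnorm_ge0.
by rewrite -(ler_pM2r y_gt0) -expr2 -mulrA.
Qed.

Lemma proj_pow_vnorm q v : vnorm v <= 1 ->
  vnorm (P *m A *m v) ^+ (2 * q).+1 <= mspec (P *m G ^+ q *m A).
Proof.
move=> v_le1; set w := P *m A *m v; set r := vnorm w; set S := mspec _.
have Pw : P *m w = w by rewrite /w !mulmxA P_idem.
have d0 : gram_moment A w 0 = r ^+ 2 by rewrite /gram_moment mul1mx vnorm_sq.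
have := log_convex_pow (gram_moment_ge0 A w) (gram_moment_log_convex A w) (2 * q).
rewrite d0 => d_logcvx.
set a := r ^+ (2 * q).+1.
have [->|a_neq0] := eqVneq a 0; first exact: mspec_ge0.
have a2_gt0 : 0 < a ^+ 2 by rewrite exprn_gt0 // lt0r a_neq0 exprn_ge0 ?vnorm_ge0.
suff : a ^+ 2 * a ^+ 2 <= S ^+ 2 * a ^+ 2.
  by rewrite ler_pM2r // ler_pXn2r // nnegrE ?exprn_ge0 ?vnorm_ge0 ?mspec_ge0.
have -> : a ^+ 2 * a ^+ 2 = (r ^+ 4) ^+ (2 * q).+1.
  by rewrite /a -!exprM -exprD; congr (_ ^+ _); lia.
have -> : S ^+ 2 * a ^+ 2 = r ^+ 2 * S ^+ 2 * (r ^+ 2) ^+ (2 * q).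
  by rewrite [RHS]mulrAC [RHS]mulrC /a -!exprM -exprD; congr (_ * r ^+ _); lia.
have d1n : (r ^+ 4) ^+ (2 * q).+1 <= gram_moment A w 1 ^+ (2 * q).+1.
  apply: lerXn2r; rewrite ?nnegrE ?exprn_ge0 ?vnorm_ge0 ?gram_moment_ge0 //.
  exact: gram_moment1_ge.
apply: le_trans d1n (le_trans d_logcvx _).
by rewrite ler_wpM2r ?exprn_ge0 ?vnorm_ge0 ?gram_moment_odd_le.
Qed.

Lemma mspec_proj_pow q :
  mspec (P *m A) <= powR (mspec (P *m G ^+ q *m A)) (1 / (2 * q + 1)%:R).
Proof.
rewrite addn1; apply: mspec_le => v v_le1.
by apply: le_powR_inv; [exact: vnorm_ge0 | exact: proj_pow_vnorm].
Qed.

End ProjectorPowers.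

Section ComplementProjector.
Variables (R : comPzRingType) (N m : nat) (Q : 'M[R]_(N, m)).

Lemma trmx_compl_proj : (1%:M - Q *m Q^T)^T = 1%:M - Q *m Q^T.
Proof. by rewrite linearB /= trmx1 trmx_mul trmxK. Qed.

Lemma compl_proj_idem : Q^T *m Q = 1%:M ->
  (1%:M - Q *m Q^T) *m (1%:M - Q *m Q^T) = 1%:M - Q *m Q^T.
Proof.
move=> QtQ; rewrite mulmxBl mul1mx mulmxBr mulmx1.
by rewrite -mulmxA (mulmxA Q^T) QtQ mul1mx subrr subr0.
Qed.

End ComplementProjector.

Lemma csubE n (i j : 'I_n.+1) : csub i j = (i - j)%R.
Proof. by apply: val_inj; rewrite /= modnDmr addnBA // ltnW. Qed.

Lemma cnegE n (i : 'I_n.+1) : cneg i = (- i)%R.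
Proof. exact: val_inj. Qed.

Section TensorAlgebra.
Variable R : realType.

Lemma mx_nil_rows n1 n2 (M M' : 'M[R]_(\sum_(i < 0) n1, n2)) : M = M'.
Proof. by apply/matrixP => -[i lt_i0]; exfalso; move: lt_i0; rewrite big_ord0. Qed.

Lemma bcirc_mul n1 n2 n4 n3 (X : tensor R n1 n2 n3) (Y : tensor R n2 n4 n3) :
  bcirc (tprod X Y) = bcirc X *m bcirc Y.
Proof.
case: n3 X Y => [|n3] X Y; first exact: mx_nil_rows.
rewrite /bcirc mul_mxblock /tprod /tfold /tunfold /bcirc mul_mxblock_mxrow.
apply: eq_mxblock => i j; rewrite mxcolK [RHS](reindex_inj (addIr j)) /=.
apply: eq_bigr => k _; rewrite !csubE addrK; congr (X _ *m _).
by rewrite opprD addrA addrAC.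
Qed.

Lemma bcirc_tr n1 n2 n3 (X : tensor R n1 n2 n3) : bcirc (ttr X) = (bcirc X)^T.
Proof.
case: n3 X => [|n3] X; first exact: mx_nil_rows.
by rewrite /bcirc tr_mxblock; apply: eq_mxblock => i j; rewrite /ttr cnegE !csubE opprB.
Qed.

Lemma bcirc_tid n n3 : bcirc (@tid R n n3) = 1%:M.
Proof.
case: n3 => [|n3]; first exact: mx_nil_rows.
rewrite -(mxdiagZ 1) /mxdiag /bcirc; apply: eq_mxblock => i j.
rewrite /tid csubE (_ : (_ == 0%N) = (i == j)); last by rewrite -subr_eq0.
by case: (i == j); rewrite ?conform_mx_id.
Qed.

Lemma bcirc_sub n1 n2 n3 (X Y : tensor R n1 n2 n3) :
  bcirc (tsub X Y) = bcirc X - bcirc Y.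
Proof. by rewrite /bcirc -mxblockB. Qed.

Lemma bcirc_pow n n3 (A : tensor R n n n3) j : bcirc (tpow A j) = bcirc A ^+ j.
Proof. by elim: j => [|j IHj] /=; rewrite ?bcirc_tid // bcirc_mul IHj exprS. Qed.

Definition tslice0 n1 n2 n3 (S : 'M[R]_(n1, n2)) : tensor R n1 n2 n3 :=
  fun k => if (k == 0 :> nat) then S else 0.

Lemma tprod_tslice0 n1 n2 n4 n3 (X : tensor R n1 n2 n3) (S : 'M[R]_(n2, n4)) k :
  tprod X (tslice0 S) k = X k *m S.
Proof.
case: n3 X k => [|n3] X k; first by case: k.
rewrite /tprod /tfold /bcirc /tunfold mul_mxblock_mxrow mxcolK.
rewrite (bigD1 0) //= big1 => [|j j_neq0]; rewrite /tslice0 /=.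
  by rewrite csubE subr0 addr0.
by rewrite ifN ?mulmx0.
Qed.

Lemma ttr_tslice0 n1 n2 n3 (S : 'M[R]_(n1, n2)) :
  ttr (tslice0 S) = tslice0 S^T :> tensor R n2 n1 n3.
Proof.
apply: funext; case: n3 => [[]//|n3] k.
rewrite /ttr /tslice0 cnegE.
rewrite -[(k == 0 :> nat)]/(k == 0) -[(- k == 0 :> nat)]/(- k == 0) oppr_eq0.
by case: (k == 0); rewrite ?trmx0.
Qed.

Definition last_block n q : 'M[R]_(\sum_(j < q.+1) n, n) :=
  mxcol (fun j : 'I_q.+1 => if j == ord_max then 1%:M else 0 : 'M[R]_n).

Lemma mul_mxrow_last_block m n q (A : 'I_q.+1 -> 'M[R]_(m, n)) :
  mxrow A *m last_block n q = A ord_max.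
Proof.
rewrite mul_mxrow_mxcol (bigD1 ord_max) //= eqxx mulmx1 big1 ?addr0 // => j.
by move=> /negbTE ->; rewrite mulmx0.
Qed.

Lemma last_block_isometry n q : (last_block n q)^T *m last_block n q = 1%:M.
Proof. by rewrite tr_mxcol mul_mxrow_last_block eqxx trmx1. Qed.

Lemma tcat_last n1 n2 n3 q (A : 'I_q.+1 -> tensor R n1 n2 n3) :
  tprod (tcat A) (tslice0 (last_block n2 q)) = A ord_max.
Proof. by apply: funext => k; rewrite tprod_tslice0 mul_mxrow_last_block. Qed.

Lemma bcirc_last_block_isometry n q n3 :
  let E := bcirc (@tslice0 _ _ n3 (last_block n q)) in E^T *m E = 1%:M.
Proof.
rewrite /= -bcirc_tr -bcirc_mul -(bcirc_tid n n3); congr bcirc.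
apply: funext => k; rewrite ttr_tslice0 tprod_tslice0 /tslice0 /tid.
by case: ifP; rewrite ?mul0mx ?last_block_isometry.
Qed.

Lemma tspec_tcat_last n0 n1 n2 n3 q (Y : tensor R n0 n1 n3)
    (A : 'I_q.+1 -> tensor R n1 n2 n3) :
  tspec (tprod Y (A ord_max)) <= tspec (tprod Y (tcat A)).
Proof.
rewrite /tspec -tcat_last !bcirc_mul mulmxA.
exact/mspec_mulmx_isometry/bcirc_last_block_isometry.
Qed.

End TensorAlgebra.

Theorem theorem1 (R : realType) (n1 n2 n3 s q m : nat)
  (X : tensor R n1 n2 n3) (B : tensor R n2 s n3)
  (Q : tensor R n1 m n3) (Rf : tensor R m (\sum_(j < q.+1) s) n3) :
  let XXt := tprod X (ttr X) in
  let K := tcat (fun j : 'I_q.+1 => tprod (tprod (tpow XXt j) X) B) in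
  let Z := tcat (fun j : 'I_q.+1 => tprod (tpow XXt j) X) in
  let Pk := tprod Q (ttr Q) in
  K = tprod Q Rf ->
  tprod (ttr Q) Q = @tid R m n3 ->
  upper_slices Rf ->
  tspec (tprod (tsub (@tid R n1 n3) (tprod Q (ttr Q))) X)
    <= powR (tspec (tprod (tsub (@tid R n1 n3) Pk) Z)) (1 / (2 * q + 1)%:R).
Proof.
move=> XXt K Z Pk _ QtQ _; rewrite /Pk.
set P := tsub _ (tprod Q (ttr Q)).
have Q_iso : (bcirc Q)^T *m bcirc Q = 1%:M.
  by rewrite -bcirc_tr -bcirc_mul QtQ bcirc_tid.
have bcircP : bcirc P = 1%:M - bcirc Q *m (bcirc Q)^T.
  by rewrite bcirc_sub bcirc_tid bcirc_mul bcirc_tr.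
have last_Z := tspec_tcat_last P (fun j : 'I_q.+1 => tprod (tpow XXt j) X).
apply: le_trans (ge0_ler_powR _ _ _ last_Z);
  [|by rewrite divr_ge0 ?ler0n|exact: mspec_ge0..].
rewrite /tspec !bcirc_mul bcirc_pow /XXt bcirc_mul bcirc_tr bcircP mulmxA.
apply: mspec_proj_pow; [exact: trmx_compl_proj | exact: compl_proj_idem].
Qed.
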